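(* Assume $\mu$ satisfies $(\mathrm H_\mu)$ and define $\ell$, $Q_n$, $V_\star$ as in the context. There is a constant $C>0$ such that for every $n\ge1$, \[ n<V_\star(Q_n)<n-C\ln V_\star^{-1}(n). \]
   Context: Condition $(\mathrm H_\mu)$: $\mu=(\mu_k)_{k\ge0}$ is a probability measure on $\mathbb Z_+$ with $\sum_k k\mu_k=1$, and there is a slowly varying function $L:\mathbb R_+\to\mathbb R_+$ with $\mu_n=L(n)/n^2$ for all $n\ge1$. Let $G_\mu(s)=\sum_k\mu_ks^k$, and for $s\in(0,1]$ let $\ell(s)=\big(G_\mu(1-s)-(1-s)\big)/s$ (positive and increasing, with $\ell(s)\to0$ as $s\downarrow0$). Let $Q_n=\mathbf P(\mathcal H\ge n)$ where $\mathcal H$ is the height of a $\mu$-Bienaymé (Galton–Watson) tree. For $y\in(0,1]$ let $V_\star(y)=\int_y^1\frac{\mathrm dx}{x\ell(x)}$, a decreasing bijection from $(0,1]$ onto $[0,\infty)$, and $V_\star^{-1}$ its inverse. *)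

From Stdlib Require Import Reals.
From Coquelicot Require Import Coquelicot.
From mathcomp Require Import classical_sets reals measure lebesgue_measure Rstruct.

Open Scope R_scope.

Definition slowly_varying (L : R -> R) : Prop :=
  (forall x, 0 < x -> 0 < L x) /\
  measurable_fun (@setT (R : realType)) (L : (R : realType) -> (R : realType)) /\
  (forall lam, 0 < lam ->
     is_lim (fun x => L (lam * x) / L x) p_infty 1).

Definition H_mu (mu : nat -> R) : Prop :=
  (forall k, 0 <= mu k) /\
  is_series mu 1 /\
  is_series (fun k => INR k * mu k) 1 /\
  exists L : R -> R, slowly_varying L /\
    forall n : nat, (1 <= n)%nat -> mu n = L (INR n) / (INR n ^ 2).

Definition G_mu (mu : nat -> R) (s : R) : R := Series (fun k => mu k * s ^ k).

Definition ell (mu : nat -> R) (s : R) : R := (G_mu mu (1 - s) - (1 - s)) / s.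

(* Q_n = P(height >= n) of a mu-Bienayme tree; P(height < n) = P(Z_n = 0)
   is the n-fold iterate of G_mu evaluated at 0. *)
Definition Q (mu : nat -> R) (n : nat) : R := 1 - Nat.iter n (G_mu mu) 0.

Definition V_star (mu : nat -> R) (y : R) : R :=
  RInt (fun x => 1 / (x * ell mu x)) y 1.

From Stdlib Require Import Reals Lra Lia.
From Coquelicot Require Import Coquelicot.
Open Scope R_scope.

(* With e := ell, the sequence Q_n satisfies Q_(n+1) = Q_n (1 - e(Q_n)), so that
   V_star(Q_(n+1)) - V_star(Q_n) is the integral of 1/(x e(x)) over an interval of length
   Q_n e(Q_n).  Since e is nondecreasing and e(x)/x nonincreasing, this increment lies strictly
   above 1 and below 1 + B (ln Q_n - ln Q_(n+1)), whence n < V_star(Q_n) <= n - B ln Q_n.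
   It remains to bound -ln Q_n by a multiple of -ln y, where V_star(y) = n: when e(y) is small,
   V_star(Q_n) - V_star(y) >= (ln y - ln Q_n) / e(y) forces -ln Q_n <= -2 ln y; otherwise n is
   bounded, and so is -ln Q_n, while -ln y stays away from 0.  The required properties of ell
   follow from ell(s) = sum_k mu_k sum_(j<k) (1 - (1-s)^j). *)

Lemma ln_nonpos x : 0 < x <= 1 -> ln x <= 0.
Proof. intros Hx. rewrite <- ln_1. apply ln_le; lra. Qed.

Lemma ln_neg x : 0 < x < 1 -> ln x < 0.
Proof. intros Hx. rewrite <- ln_1. apply ln_increasing; lra. Qed.

Lemma ln_1m_le x : x < 1 -> ln (1 - x) <= - x.
Proof.
  intros Hx. rewrite <- (ln_exp (- x)). apply ln_le; [lra|].
  destruct (Req_dec x 0) as [->|Hne]; [rewrite Ropp_0, exp_0; lra|].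
  left. apply exp_ineq1. lra.
Qed.

Lemma inv_sqr_1m_le x m : 0 <= x <= m -> m < 1 -> 1 / (1 - x) ^ 2 <= 1 + 2 / (1 - m) ^ 2 * x.
Proof.
  intros Hx Hm.
  assert (0 < (1 - m) ^ 2) by (apply pow_lt; lra).
  assert ((1 - m) ^ 2 <= (1 - x) ^ 2) by (simpl; nra).
  assert (E : 1 / (1 - x) ^ 2 - 1 = x * (2 - x) / (1 - x) ^ 2) by (field; lra).
  assert (x * (2 - x) / (1 - x) ^ 2 <= 2 * x / (1 - m) ^ 2).
  { apply Rmult_le_compat; [nra | left; apply Rinv_0_lt_compat; nra | nra |].
    apply Rinv_le_contravar; lra. }
  replace (2 / (1 - m) ^ 2 * x) with (2 * x / (1 - m) ^ 2) by (field; lra). lra.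
Qed.

Lemma pow_1m_range s k : 0 <= s <= 1 -> 0 <= (1 - s) ^ k <= 1.
Proof.
  intros Hs. split; [apply pow_le; lra|].
  rewrite <- (pow1 k) at 2. apply pow_incr. lra.
Qed.

Lemma sum_n_le_upto (a b : nat -> R) N :
  (forall k, (k <= N)%nat -> a k <= b k) -> sum_n a N <= sum_n b N.
Proof.
  intros H. induction N as [|N IH]; rewrite ?sum_O, ?sum_Sn; [apply H; lia|].
  change (sum_n a N + a (S N) <= sum_n b N + b (S N)).
  assert (sum_n a N <= sum_n b N) by (apply IH; intros k Hk; apply H; lia).
  assert (a (S N) <= b (S N)) by (apply H; lia). lra.
Qed.

Lemma is_series_le_nonneg (a b : nat -> R) (la lb : R) : (forall n, 0 <= a n <= b n) ->
  is_series a la -> is_series b lb -> la <= lb.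
Proof.
  intros H Ha Hb. rewrite <- (is_series_unique _ _ Ha), <- (is_series_unique _ _ Hb).
  apply Series_le; [exact H | eexists; eauto].
Qed.

Lemma sum_n_le_is_series (a : nat -> R) (l : R) N :
  (forall n, 0 <= a n) -> is_series a l -> sum_n a N <= l.
Proof.
  intros Ha Hs.
  assert (R := is_lim_seq_le_loc (fun _ => sum_n a N) (sum_n a) (sum_n a N) l).
  apply R; [| apply is_lim_seq_const | exact Hs].
  exists N. intros n Hn. induction Hn as [|n Hn IH]; [lra|].
  rewrite sum_Sn. change (sum_n a N <= sum_n a n + a (S n)). specialize (Ha (S n)). lra.
Qed.

Lemma is_series_tail (a : nat -> R) (l : R) N :
  is_series a l -> is_series (fun k => a (S N + k)%nat) (l - sum_n a N).
Proof.
  intros Ha. apply (is_series_incr_n a (S N)); [lia|].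
  assert (E : l = l - sum_n a N + sum_n a N) by ring. rewrite E in Ha. exact Ha.
Qed.

Section Recursion.

Variable e : R -> R.
Hypothesis e_pos : forall s, 0 < s <= 1 -> 0 < e s.
Hypothesis e_nondecr : forall s t, 0 < s -> s <= t -> t <= 1 -> e s <= e t.
Hypothesis e_div_nonincr : forall s t, 0 < s -> s <= t -> t <= 1 -> s * e t <= t * e s.
Hypothesis e_1_lt_1 : e 1 < 1.
Hypothesis e_vanishing : forall d, 0 < d -> exists y, 0 < y <= 1 /\ e y <= d.
Hypothesis e_continuous : forall x, 0 < x <= 1 -> continuity_pt e x.

Definition density (x : R) : R := 1 / (x * e x).

Definition V (y : R) : R := RInt density y 1.

Fixpoint Q_rec (n : nat) : R :=
  match n with O => 1 | S n => Q_rec n * (1 - e (Q_rec n)) end.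

Lemma density_pos x : 0 < x <= 1 -> 0 < density x.
Proof. intros Hx. unfold density. specialize (e_pos x Hx). apply Rdiv_lt_0_compat; nra. Qed.

Lemma density_decr x z : 0 < x -> x < z -> z <= 1 -> density z < density x.
Proof.
  intros Hx Hxz Hz. unfold density, Rdiv. rewrite !Rmult_1_l.
  assert (Ex := e_pos x ltac:(lra)). assert (Exz := e_nondecr x z ltac:(lra) ltac:(lra) Hz).
  assert (Ez := e_pos z ltac:(lra)).
  apply Rinv_lt_contravar; [apply Rmult_lt_0_compat; apply Rmult_lt_0_compat; lra | nra].
Qed.

Lemma density_nonincr x z : 0 < x -> x <= z -> z <= 1 -> density z <= density x.
Proof.
  intros Hx Hxz Hz. destruct (Req_dec x z) as [->|Hne]; [lra|].
  left. apply density_decr; lra.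
Qed.

Lemma ex_RInt_density a b : 0 < a -> a <= b -> b <= 1 -> ex_RInt density a b.
Proof.
  intros Ha Hab Hb. apply (ex_RInt_continuous (V := R_CompleteNormedModule)). intros z Hz.
  rewrite Rmin_left in Hz by lra. rewrite Rmax_right in Hz by lra.
  apply continuity_pt_filterlim. unfold density.
  apply (continuity_pt_div (fun _ => 1) (fun x => x * e x)).
  - apply continuity_pt_const. intros u v; reflexivity.
  - apply (continuity_pt_mult (fun x => x) e); [apply continuity_pt_id | apply e_continuous; lra].
  - specialize (e_pos z ltac:(lra)). nra.
Qed.

Lemma V_1 : V 1 = 0.
Proof. unfold V. rewrite RInt_point. reflexivity. Qed.

Lemma V_sub a b : 0 < a -> a <= b -> b <= 1 -> V a - V b = RInt density a b.
Proof.
  intros Ha Hab Hb. unfold V.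
  rewrite <- (RInt_Chasles density a b 1) by (apply ex_RInt_density; lra).
  change (RInt density a b + RInt density b 1 - RInt density b 1 = RInt density a b). ring.
Qed.

Lemma RInt_density_le a b : 0 < a -> a <= b -> b <= 1 -> RInt density a b <= (b - a) * density a.
Proof.
  intros Ha Hab Hb.
  replace ((b - a) * density a) with (RInt (fun _ => density a) a b)
    by (rewrite RInt_const; reflexivity).
  apply RInt_le; [lra | apply ex_RInt_density; lra | apply ex_RInt_const |].
  intros x Hx. apply density_nonincr; lra.
Qed.

Lemma RInt_density_ge a b : 0 < a -> a <= b -> b <= 1 -> (b - a) * density b <= RInt density a b.
Proof.
  intros Ha Hab Hb.
  replace ((b - a) * density b) with (RInt (fun _ => density b) a b)
    by (rewrite RInt_const; reflexivity).
  apply RInt_le; [lra | apply ex_RInt_const | apply ex_RInt_density; lra |].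
  intros x Hx. apply density_nonincr; lra.
Qed.

Lemma RInt_density_gt a b : 0 < a -> a < b -> b <= 1 -> (b - a) * density b < RInt density a b.
Proof.
  intros Ha Hab Hb. set (m := (a + b) / 2).
  rewrite <- (RInt_Chasles density a m b) by (apply ex_RInt_density; unfold m; lra).
  change (plus ?u ?v) with (u + v).
  assert (Lam := RInt_density_ge a m Ha ltac:(unfold m; lra) ltac:(unfold m; lra)).
  assert (Lmb := RInt_density_ge m b ltac:(unfold m; lra) ltac:(unfold m; lra) Hb).
  assert (D := density_decr m b ltac:(unfold m; lra) ltac:(unfold m; lra) Hb).
  assert (0 < m - a) by (unfold m; lra).
  nra.
Qed.

Lemma RInt_density_ge_ln a b : 0 < a -> a <= b -> b <= 1 -> (ln b - ln a) / e b <= RInt density a b.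
Proof.
  intros Ha Hab Hb. assert (Eb := e_pos b ltac:(lra)).
  assert (Hln : is_RInt (fun x => / x * / e b) a b (minus (ln b / e b) (ln a / e b))).
  { apply (is_RInt_derive (fun x => ln x / e b)); intros x Hx;
      rewrite Rmin_left in Hx by lra; rewrite Rmax_right in Hx by lra.
    - auto_derive; [lra | field; lra].
    - apply continuity_pt_filterlim.
      apply (continuity_pt_mult (fun x => / x) (fun _ => / e b)).
      + apply continuity_pt_inv; [apply continuity_pt_id | lra].
      + apply continuity_pt_const. intros u v; reflexivity. }
  replace ((ln b - ln a) / e b) with (RInt (fun x => / x * / e b) a b)
    by (rewrite (is_RInt_unique _ _ _ _ Hln); unfold minus, plus, opp; simpl; field; lra).
  apply RInt_le; [lra | eexists; eauto | apply ex_RInt_density; lra |].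
  intros x Hx. unfold density. assert (Ex := e_pos x ltac:(lra)).
  assert (e x <= e b) by (apply e_nondecr; lra).
  unfold Rdiv. rewrite Rmult_1_l, Rinv_mult.
  apply Rmult_le_compat_l; [left; apply Rinv_0_lt_compat; lra | apply Rinv_le_contravar; lra].
Qed.

Lemma V_nonincr a b : 0 < a -> a <= b -> b <= 1 -> V b <= V a.
Proof.
  intros Ha Hab Hb. assert (D := V_sub a b Ha Hab Hb).
  assert (L := RInt_density_ge a b Ha Hab Hb).
  assert (P := density_pos b ltac:(lra)). nra.
Qed.

Lemma Q_rec_range n : 0 < Q_rec n <= 1.
Proof.
  induction n as [|n IH]; simpl; [lra|].
  assert (E := e_pos _ IH). assert (e (Q_rec n) <= e 1) by (apply e_nondecr; lra).
  split; [apply Rmult_lt_0_compat; lra|].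
  rewrite <- (Rmult_1_r 1). apply Rmult_le_compat; lra.
Qed.

Lemma V_Q_rec_step_gt n : 1 < V (Q_rec (S n)) - V (Q_rec n).
Proof.
  assert (Hb := Q_rec_range n). set (b := Q_rec n) in *. set (a := Q_rec (S n)).
  assert (Ha : a = b * (1 - e b)) by reflexivity.
  assert (Eb := e_pos b Hb). assert (e b <= e 1) by (apply e_nondecr; lra).
  assert (0 < b * e b) by (apply Rmult_lt_0_compat; lra).
  assert (Ha0 : 0 < a) by (rewrite Ha; apply Rmult_lt_0_compat; lra).
  rewrite V_sub by lra.
  replace 1 with ((b - a) * density b) by (rewrite Ha; unfold density; field; lra).
  apply RInt_density_gt; lra.
Qed.

Let B := 2 / (1 - e 1) ^ 2.

Lemma B_pos : 0 < B.
Proof. apply Rdiv_lt_0_compat; [lra | apply pow_lt; lra]. Qed.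

Lemma V_Q_rec_step_le n :
  V (Q_rec (S n)) - V (Q_rec n) <= 1 + B * (ln (Q_rec n) - ln (Q_rec (S n))).
Proof.
  assert (Hb := Q_rec_range n). set (b := Q_rec n) in *. set (a := Q_rec (S n)).
  assert (Ha : a = b * (1 - e b)) by reflexivity.
  set (x := e b) in *. assert (Hx : 0 < x) by apply e_pos, Hb.
  assert (x <= e 1) by (apply e_nondecr; lra).
  assert (Ha0 : 0 < a) by (rewrite Ha; apply Rmult_lt_0_compat; lra).
  assert (Hab : a < b) by (rewrite Ha; nra).
  (* e(a)/a >= e(b)/b turns the left-endpoint bound into 1/(1-x)^2 *)
  assert (Ea : (1 - x) * x <= e a).
  { apply Rmult_le_reg_l with b; [lra|].
    replace (b * ((1 - x) * x)) with (a * x) by (rewrite Ha; ring).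
    apply e_div_nonincr; lra. }
  assert (Step : (b - a) * density a <= 1 / (1 - x) ^ 2).
  { unfold density. apply Rle_trans with ((b - a) * (1 / (a * ((1 - x) * x)))).
    - apply Rmult_le_compat_l; [lra|]. apply Rmult_le_compat_l; [lra|].
      apply Rinv_le_contravar; [|apply Rmult_le_compat_l; lra].
      apply Rmult_lt_0_compat; [|apply Rmult_lt_0_compat]; lra.
    - right. rewrite Ha. field. lra. }
  assert (Hln : x <= ln b - ln a) by (rewrite Ha, ln_mult by lra; assert (T := ln_1m_le x); lra).
  assert (Hsq := inv_sqr_1m_le x (e 1) ltac:(lra) e_1_lt_1). fold B in Hsq.
  assert (Hup := RInt_density_le a b Ha0 ltac:(lra) ltac:(lra)).
  rewrite V_sub by lra. pose proof B_pos. nra.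
Qed.

Lemma V_Q_rec_gt n : (1 <= n)%nat -> INR n < V (Q_rec n).
Proof.
  intros Hn. induction n as [|n IH]; [lia|].
  assert (Step := V_Q_rec_step_gt n). rewrite S_INR.
  destruct n as [|n]; [simpl in *; rewrite V_1 in Step; lra|].
  specialize (IH ltac:(lia)). lra.
Qed.

Lemma V_Q_rec_le n : V (Q_rec n) <= INR n + B * - ln (Q_rec n).
Proof.
  induction n as [|n IH]; [simpl; rewrite V_1, ln_1; lra|].
  assert (Step := V_Q_rec_step_le n). rewrite S_INR. lra.
Qed.

Lemma neg_ln_Q_rec_le n : - ln (Q_rec n) <= INR n * - ln (1 - e 1).
Proof.
  induction n as [|n IH]; [simpl; rewrite ln_1; lra|].
  assert (Hq := Q_rec_range n). assert (E := e_pos _ Hq).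
  assert (e (Q_rec n) <= e 1) by (apply e_nondecr; lra).
  assert (ln (1 - e 1) <= ln (1 - e (Q_rec n))) by (apply ln_le; lra).
  simpl Q_rec. rewrite ln_mult, S_INR by lra. lra.
Qed.

Lemma V_ge_1_bounded_away : exists y1, 0 < y1 < 1 /\ forall y, 0 < y <= 1 -> 1 <= V y -> y <= y1.
Proof.
  set (f := density (1 / 2)). assert (Hf : 0 < f) by (apply density_pos; lra).
  exists (Rmax (1 / 2) (1 - / f)). split.
  { assert (0 < / f) by (apply Rinv_0_lt_compat; lra).
    split; [apply Rlt_le_trans with (1 / 2); [lra | apply Rmax_l] | apply Rmax_lub_lt; lra]. }
  intros y Hy HV. destruct (Rle_or_lt y (1 / 2)) as [Hy2|Hy2].
  - apply Rle_trans with (1 / 2); [exact Hy2 | apply Rmax_l].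
  - apply Rle_trans with (1 - / f); [|apply Rmax_r].
    assert (U := RInt_density_le y 1 ltac:(lra) ltac:(lra) ltac:(lra)).
    assert (density y <= f) by (apply density_nonincr; lra).
    fold (V y) in U. assert (1 <= (1 - y) * f) by nra.
    assert (/ f <= 1 - y); [|lra].
    apply Rmult_le_reg_r with f; [lra|]. rewrite Rinv_l; lra.
Qed.

(* V(Q_rec n) - V(y) is at least (ln y - ln (Q_rec n)) / e(y), and at most B (-ln (Q_rec n)). *)
Lemma neg_ln_Q_rec_le_twice n y : 0 < y <= 1 -> e y <= / (2 * B) -> V y = INR n ->
  - ln (Q_rec n) <= 2 * - ln y.
Proof.
  intros Hy Ey HV. pose proof B_pos.
  assert (Hq := Q_rec_range n). assert (Eyp := e_pos y Hy).
  destruct (Rlt_or_le (Q_rec n) y) as [Hqy|Hyq].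
  2: { assert (ln y <= ln (Q_rec n)) by (apply ln_le; lra).
       assert (ln y <= 0) by (apply ln_nonpos; lra). lra. }
  assert (Low := RInt_density_ge_ln (Q_rec n) y ltac:(lra) ltac:(lra) ltac:(lra)).
  rewrite <- V_sub, HV in Low by lra. assert (Up := V_Q_rec_le n).
  set (t := - ln (Q_rec n)) in *. set (s := - ln y) in *.
  assert (K : t - s <= B * t * e y).
  { replace (t - s) with ((ln y - ln (Q_rec n)) / e y * e y) by (unfold t, s; field; lra).
    apply Rmult_le_compat_r; lra. }
  assert (0 <= t) by (assert (ln (Q_rec n) <= 0) by (apply ln_nonpos; lra); unfold t; lra).
  assert (B * t * e y <= B * t * / (2 * B)) by (apply Rmult_le_compat_l; nra).
  replace (B * t * / (2 * B)) with (t / 2) in * by (field; lra). lra.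
Qed.

Theorem V_Q_rec_bounds : exists C : R, 0 < C /\
  forall (n : nat) (y : R), (1 <= n)%nat -> 0 < y <= 1 -> V y = INR n ->
    INR n < V (Q_rec n) < INR n - C * ln y.
Proof.
  pose proof B_pos.
  destruct (e_vanishing (/ (2 * B))) as [y0 [Hy0 Ey0]]; [apply Rinv_0_lt_compat; lra|].
  destruct V_ge_1_bounded_away as [y1 [Hy1 Hbound]].
  set (c := - ln (1 - e 1)).
  assert (Hc : 0 <= c) by (assert (0 < e 1) by (apply e_pos; lra);
    assert (ln (1 - e 1) <= 0) by (apply ln_nonpos; lra); unfold c; lra).
  set (s1 := - ln y1).
  assert (Hs1 : 0 < s1) by (assert (ln y1 < 0) by (apply ln_neg; lra); unfold s1; lra).
  assert (HV0 : 0 <= V y0) by (rewrite <- V_1; apply V_nonincr; lra).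
  set (K := B * V y0 * c / s1).
  assert (HK : 0 <= K) by (unfold K; apply Rmult_le_pos;
    [apply Rmult_le_pos; nra | left; apply Rinv_0_lt_compat; lra]).
  exists (2 * B + 1 + K). split; [lra|].
  intros n y Hn Hy HV. split; [apply V_Q_rec_gt, Hn|].
  assert (Hn1 : 1 <= INR n) by (apply (le_INR 1); exact Hn).
  assert (Hys : s1 <= - ln y).
  { assert (ln y <= ln y1) by (apply ln_le; [lra | apply Hbound; lra]). unfold s1; lra. }
  assert (Up := V_Q_rec_le n).
  enough (B * - ln (Q_rec n) <= (2 * B + K) * - ln y) by nra.
  destruct (Rle_or_lt (e y) (/ (2 * B))) as [Ey|Ey].
  - assert (T := neg_ln_Q_rec_le_twice n y Hy Ey HV). nra.
  - (* otherwise y0 < y, so n = V y <= V y0 bounds -ln (Q_rec n) *)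
    assert (y0 < y).
    { destruct (Rlt_or_le y0 y); [assumption|].
      assert (e y <= e y0) by (apply e_nondecr; lra). lra. }
    assert (INR n <= V y0) by (rewrite <- HV; apply V_nonincr; lra).
    assert (T := neg_ln_Q_rec_le n).
    assert (B * - ln (Q_rec n) <= K * s1).
    { unfold K. replace (B * V y0 * c / s1 * s1) with (B * (V y0 * c)) by (field; lra).
      apply Rmult_le_compat_l; [lra|]. fold c in T. nra. }
    nra.
Qed.

End Recursion.

Fixpoint geom1m (j : nat) (s : R) : R :=
  match j with O => 0 | S j => geom1m j s + (1 - s) ^ j end.

Fixpoint ell_coef (k : nat) (s : R) : R :=
  match k with O => 0 | S k => ell_coef k s + (1 - (1 - s) ^ k) end.

Fixpoint ell_coef_div (k : nat) (s : R) : R :=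
  match k with O => 0 | S k => ell_coef_div k s + geom1m k s end.

Lemma geom1m_mul j s : s * geom1m j s = 1 - (1 - s) ^ j.
Proof. induction j as [|j IH]; simpl; [ring|]. rewrite Rmult_plus_distr_l, IH. ring. Qed.

Lemma ell_coef_mul k s : s * ell_coef k s = (1 - s) ^ k - 1 + INR k * s.
Proof.
  induction k as [|k IH]; simpl ell_coef; [simpl; ring|].
  rewrite S_INR, Rmult_plus_distr_l, IH. simpl. ring.
Qed.

Lemma ell_coef_div_mul k s : s * ell_coef_div k s = ell_coef k s.
Proof.
  induction k as [|k IH]; simpl; [ring|]. rewrite Rmult_plus_distr_l, IH, geom1m_mul. ring.
Qed.

Lemma geom1m_le j s : 0 <= s <= 1 -> geom1m j s <= INR j.
Proof.
  intros Hs. induction j as [|j IH]; simpl geom1m; [simpl; lra|].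
  rewrite S_INR. assert (P := pow_1m_range s j Hs). lra.
Qed.

Lemma geom1m_nonincr j s t : 0 <= s -> s <= t -> t <= 1 -> geom1m j t <= geom1m j s.
Proof.
  intros Hs Hst Ht. induction j as [|j IH]; simpl; [lra|].
  assert ((1 - t) ^ j <= (1 - s) ^ j) by (apply pow_incr; lra). lra.
Qed.

Lemma ell_coef_range k s : 0 <= s <= 1 -> 0 <= ell_coef k s <= INR k.
Proof.
  intros Hs. induction k as [|k IH]; simpl ell_coef; [simpl; lra|].
  rewrite S_INR. assert (P := pow_1m_range s k Hs). lra.
Qed.

Lemma ell_coef_le_sqr k s : 0 <= s <= 1 -> ell_coef k s <= INR k * INR k * s.
Proof.
  intros Hs. induction k as [|k IH]; simpl ell_coef; [simpl; lra|].
  rewrite <- geom1m_mul, S_INR.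
  assert (geom1m k s <= INR k) by (apply geom1m_le, Hs).
  assert (0 <= INR k) by apply pos_INR. nra.
Qed.

Lemma ell_coef_nondecr k s t : 0 <= s -> s <= t -> t <= 1 -> ell_coef k s <= ell_coef k t.
Proof.
  intros Hs Hst Ht. induction k as [|k IH]; simpl; [lra|].
  assert ((1 - t) ^ k <= (1 - s) ^ k) by (apply pow_incr; lra). lra.
Qed.

Lemma ell_coef_div_nonincr k s t :
  0 <= s -> s <= t -> t <= 1 -> ell_coef_div k t <= ell_coef_div k s.
Proof.
  intros Hs Hst Ht. induction k as [|k IH]; simpl; [lra|].
  assert (geom1m k t <= geom1m k s) by (apply geom1m_nonincr; lra). lra.
Qed.

Lemma ell_coef_div_le k s t : 0 < s -> s <= t -> t <= 1 -> s * ell_coef k t <= t * ell_coef k s.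
Proof.
  intros Hs Hst Ht. rewrite <- (ell_coef_div_mul k t), <- (ell_coef_div_mul k s).
  assert (ell_coef_div k t <= ell_coef_div k s) by (apply ell_coef_div_nonincr; lra).
  replace (s * (t * ell_coef_div k t)) with (s * t * ell_coef_div k t) by ring.
  replace (t * (s * ell_coef_div k s)) with (s * t * ell_coef_div k s) by ring.
  apply Rmult_le_compat_l; nra.
Qed.

Section Offspring.

Variable mu : nat -> R.
Hypothesis Hmu : H_mu mu.

Let mu_nonneg : forall k, 0 <= mu k := proj1 Hmu.
Let mu_sum : is_series mu 1 := proj1 (proj2 Hmu).
Let mu_mean : is_series (fun k => INR k * mu k) 1 := proj1 (proj2 (proj2 Hmu)).

Lemma mu_2_pos : 0 < mu 2.
Proof.
  destruct (proj2 (proj2 (proj2 Hmu))) as [L [[L_pos _] HL]].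
  rewrite HL by lia. apply Rdiv_lt_0_compat; [apply L_pos|]; simpl; lra.
Qed.

Lemma is_series_G_mu s : 0 <= s <= 1 -> is_series (fun k => mu k * s ^ k) (G_mu mu s).
Proof.
  intros Hs. apply Series_correct.
  apply (ex_series_le (K := R_AbsRing) (V := R_CompleteNormedModule) _ mu); [|eexists; eauto].
  intros k. change (Rabs (mu k * s ^ k) <= mu k).
  assert (P := pow_1m_range (1 - s) k ltac:(lra)). replace (1 - (1 - s)) with s in P by ring.
  specialize (mu_nonneg k). rewrite Rabs_pos_eq by (apply Rmult_le_pos; lra).
  rewrite <- (Rmult_1_r (mu k)) at 2. apply Rmult_le_compat_l; lra.
Qed.

(* Since sum mu_k = sum k mu_k = 1, ell(s) = sum_k mu_k ((1-s)^k - 1 + k s) / s. *)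
Lemma is_series_ell s : 0 < s <= 1 -> is_series (fun k => mu k * ell_coef k s) (ell mu s).
Proof.
  intros Hs.
  assert (HG := is_series_G_mu (1 - s) ltac:(lra)).
  assert (H := is_series_scal_l (/ s) _ _ (is_series_plus _ _ _ _
    (is_series_plus _ _ _ _ HG (is_series_scal_l (-1) _ _ mu_sum))
    (is_series_scal_l s _ _ mu_mean))).
  eapply is_series_ext; [| replace (ell mu s) with
    (scal (/ s) (plus (plus (G_mu mu (1 - s)) (scal (-1) 1)) (scal s 1))); [exact H|]].
  - intros k.
    change (/ s * (mu k * (1 - s) ^ k + -1 * mu k + s * (INR k * mu k)) = mu k * ell_coef k s).
    replace (mu k * ell_coef k s) with (mu k * (s * ell_coef k s) / s) by (field; lra).
    rewrite ell_coef_mul. field. lra.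
  - change (/ s * (G_mu mu (1 - s) + -1 * 1 + s * 1) = ell mu s). unfold ell. field. lra.
Qed.

Lemma ell_term_nonneg s k : 0 <= s <= 1 -> 0 <= mu k * ell_coef k s.
Proof. intros Hs. apply Rmult_le_pos; [apply mu_nonneg | apply ell_coef_range, Hs]. Qed.

Lemma ell_pos s : 0 < s <= 1 -> 0 < ell mu s.
Proof.
  intros Hs.
  assert (P := sum_n_le_is_series _ _ 2 (fun k => ell_term_nonneg s k ltac:(lra))
    (is_series_ell s Hs)).
  rewrite !sum_Sn, sum_O in P. change (mu 0%nat * ell_coef 0 s + mu 1%nat * ell_coef 1 s
    + mu 2%nat * ell_coef 2 s <= ell mu s) in P.
  assert (E2 : ell_coef 2 s = s) by (simpl; ring). rewrite E2 in P.
  assert (T0 := ell_term_nonneg s 0 ltac:(lra)). assert (T1 := ell_term_nonneg s 1 ltac:(lra)).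
  assert (M := mu_2_pos). nra.
Qed.

Lemma ell_nondecr s t : 0 < s -> s <= t -> t <= 1 -> ell mu s <= ell mu t.
Proof.
  intros Hs Hst Ht.
  refine (is_series_le_nonneg _ _ _ _ _ (is_series_ell s ltac:(lra)) (is_series_ell t ltac:(lra))).
  intros k. split; [apply ell_term_nonneg; lra|].
  apply Rmult_le_compat_l; [apply mu_nonneg | apply ell_coef_nondecr; lra].
Qed.

Lemma ell_div_nonincr s t : 0 < s -> s <= t -> t <= 1 -> s * ell mu t <= t * ell mu s.
Proof.
  intros Hs Hst Ht.
  refine (is_series_le_nonneg _ _ _ _ _ (is_series_scal_l s _ _ (is_series_ell t ltac:(lra)))
    (is_series_scal_l t _ _ (is_series_ell s ltac:(lra)))).
  intros k. change (0 <= s * (mu k * ell_coef k t) <= t * (mu k * ell_coef k s)).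
  assert (T := ell_term_nonneg t k ltac:(lra)). assert (R := ell_coef_div_le k s t Hs Hst Ht).
  specialize (mu_nonneg k). split; [nra|].
  replace (s * (mu k * ell_coef k t)) with (mu k * (s * ell_coef k t)) by ring.
  replace (t * (mu k * ell_coef k s)) with (mu k * (t * ell_coef k s)) by ring.
  apply Rmult_le_compat_l; lra.
Qed.

Lemma ell_1_lt_1 : ell mu 1 < 1.
Proof.
  assert (E : ell mu 1 = mu 0%nat).
  { unfold ell. replace (1 - 1) with 0 by ring.
    change (G_mu mu 0) with (PSeries mu 0). rewrite PSeries_0. field. }
  assert (P := sum_n_le_is_series _ _ 2 mu_nonneg mu_sum).
  rewrite !sum_Sn, sum_O in P. change (mu 0%nat + mu 1%nat + mu 2%nat <= 1) in P.
  assert (M := mu_2_pos). specialize (mu_nonneg 1%nat). lra.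
Qed.

(* The first N terms of ell(s) are O(N s); the rest is bounded by the tail of the mean. *)
Lemma ell_le_head_tail N s : 0 < s <= 1 ->
  ell mu s <= INR N * s + (1 - sum_n (fun k => INR k * mu k) N).
Proof.
  intros Hs. set (u := fun k => INR k * mu k). set (a := fun k => mu k * ell_coef k s).
  assert (Tail : ell mu s - sum_n a N <= 1 - sum_n u N).
  { refine (is_series_le_nonneg _ _ _ _ _ (is_series_tail _ _ N (is_series_ell s Hs))
      (is_series_tail _ _ N mu_mean)).
    intros k. unfold a. split; [apply ell_term_nonneg; lra|].
    rewrite Rmult_comm. apply Rmult_le_compat_r; [apply mu_nonneg | apply ell_coef_range; lra]. }
  assert (Head : sum_n a N <= sum_n (fun k => INR N * s * u k) N).
  { apply sum_n_le_upto. intros k Hk. unfold a, u.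
    assert (INR k <= INR N) by (apply le_INR, Hk). assert (0 <= INR k) by apply pos_INR.
    assert (ell_coef k s <= INR k * INR k * s) by (apply ell_coef_le_sqr; lra).
    specialize (mu_nonneg k).
    apply Rle_trans with (mu k * (INR k * INR k * s)); [apply Rmult_le_compat_l; lra|].
    replace (INR N * s * (INR k * mu k)) with (mu k * (INR N * INR k * s)) by ring.
    apply Rmult_le_compat_l; [lra|].
    apply Rmult_le_compat_r; [lra|]. apply Rmult_le_compat_r; lra. }
  assert (Hu : sum_n u N <= 1).
  { apply sum_n_le_is_series; [|exact mu_mean]. intros k. unfold u.
    apply Rmult_le_pos; [apply pos_INR | apply mu_nonneg]. }
  assert (E : sum_n (fun k => INR N * s * u k) N = INR N * s * sum_n u N)
    by exact (sum_n_mult_l (K := R_Ring) (INR N * s) u N).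
  assert (0 <= INR N * s) by (apply Rmult_le_pos; [apply pos_INR | lra]). nra.
Qed.

Lemma ell_vanishing d : 0 < d -> exists y, 0 < y <= 1 /\ ell mu y <= d.
Proof.
  intros Hd. set (u := fun k => INR k * mu k).
  assert (Hlim : is_lim_seq (sum_n u) 1) by exact mu_mean.
  destruct (proj2 (is_lim_seq_spec _ _) Hlim (mkposreal (d / 2) ltac:(lra))) as [N HN].
  specialize (HN N (le_n N)). simpl in HN. apply Rabs_def2 in HN.
  assert (0 <= INR N) by apply pos_INR.
  set (s := Rmin 1 (d / (2 * (INR N + 1)))).
  assert (Hs : 0 < s <= 1).
  { split; [apply Rmin_glb_lt; [lra | apply Rdiv_lt_0_compat; lra] | apply Rmin_l]. }
  assert (HNs : INR N * s <= d / 2).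
  { apply Rle_trans with ((INR N + 1) * (d / (2 * (INR N + 1)))); [|right; field; lra].
    apply Rle_trans with ((INR N + 1) * s); [nra|].
    apply Rmult_le_compat_l; [lra | apply Rmin_r]. }
  exists s. split; [exact Hs|].
  assert (E := ell_le_head_tail N s Hs). fold u in E. lra.
Qed.

Lemma mu_le_1 n : mu n <= 1.
Proof.
  assert (P := sum_n_le_is_series _ _ n mu_nonneg mu_sum).
  destruct n as [|n]; [rewrite sum_O in P; exact P|].
  assert (Z := sum_n_le_upto (fun _ => 0) mu n (fun k _ => mu_nonneg k)).
  rewrite sum_n_const in Z. rewrite sum_Sn in P. change (sum_n mu n + mu (S n) <= 1) in P. lra.
Qed.

Lemma ell_continuous x : 0 < x <= 1 -> continuity_pt (ell mu) x.
Proof.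
  intros Hx.
  assert (Hr : Rbar_le 1 (CV_radius mu)).
  { apply (proj1 (CV_radius_bounded mu)). exists 1. intros n.
    rewrite pow1, Rmult_1_r, Rabs_pos_eq by apply mu_nonneg. apply mu_le_1. }
  assert (HG : continuity_pt (fun s => PSeries mu (1 - s)) x).
  { apply (continuity_pt_comp (fun s => 1 - s) (PSeries mu)).
    - apply continuity_pt_minus; [apply continuity_pt_const; intros u v; reflexivity|].
      apply continuity_pt_id.
    - apply PSeries_continuity.
      apply Rbar_lt_le_trans with 1; [simpl; rewrite Rabs_pos_eq; lra | exact Hr]. }
  apply (continuity_pt_div (fun s => PSeries mu (1 - s) - (1 - s)) (fun s => s));
    [|apply continuity_pt_id | lra].
  apply (continuity_pt_minus (fun s => PSeries mu (1 - s)) (fun s => 1 - s)); [exact HG|].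
  apply continuity_pt_minus; [apply continuity_pt_const; intros u v; reflexivity|].
  apply continuity_pt_id.
Qed.

Lemma Q_eq_Q_rec n : Q mu n = Q_rec (ell mu) n.
Proof.
  induction n as [|n IH]; [unfold Q; simpl; ring|].
  assert (Hq := Q_rec_range (ell mu) ell_pos ell_nondecr ell_1_lt_1 n).
  unfold Q in *. simpl Nat.iter. simpl Q_rec.
  replace (Nat.iter n (G_mu mu) 0) with (1 - Q_rec (ell mu) n) by lra.
  set (r := Q_rec (ell mu) n) in *. unfold ell. field. lra.
Qed.

End Offspring.

Theorem mainTheorem9 (mu : nat -> R) (Hmu : H_mu mu) :
  exists C : R, 0 < C /\
    forall (n : nat) (y : R), (1 <= n)%nat -> 0 < y <= 1 -> V_star mu y = INR n ->
      INR n < V_star mu (Q mu n) < INR n - C * ln y.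
Proof.
  destruct (V_Q_rec_bounds (ell mu) (ell_pos mu Hmu) (ell_nondecr mu Hmu) (ell_div_nonincr mu Hmu)
    (ell_1_lt_1 mu Hmu) (ell_vanishing mu Hmu) (ell_continuous mu Hmu)) as [C [HC HV]].
  exists C. split; [exact HC|].
  intros n y Hn Hy Hy_n. rewrite Q_eq_Q_rec by exact Hmu. exact (HV n y Hn Hy Hy_n).
Qed.
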